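(* Let $X$ be a continuum that is $d(X)$-Baire. Then every nest (family totally ordered by inclusion) of open dense subsets of $X$ has dense intersection.
   Context: A continuum is a nondegenerate compact connected Hausdorff space. $d(X)$ is the least cardinality of a dense subset of $X$; $X$ is $\alpha$-Baire if every family of $\alpha$ many open dense subsets of $X$ has dense intersection. *)

From HB Require Import structures.
From mathcomp Require Import all_boot all_order.
From mathcomp Require Import all_classical all_reals topology.
Set Implicit Arguments. Unset Strict Implicit. Unset Printing Implicit Defensive.
Local Open Scope classical_set_scope.
Local Open Scope card_scope.

Definition continuum (T : topologicalType) : Prop :=
  [/\ compact [set: T], connected [set: T], hausdorff_space T
    & exists x y : T, x <> y].

(* D is a dense set of least cardinality, so that #|D| = d(X). *)
Definition min_dense_set (T : topologicalType) (D : set T) : Prop :=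
  dense D /\ forall E : set T, dense E -> D #<= E.

(* X is kappa-Baire, with kappa = #|K|: every family of (at most) kappa many
   open dense subsets has dense intersection. *)
Definition card_Baire (T : topologicalType) (U : Type) (K : set U) : Prop :=
  forall F : set (set T), F #<= K ->
    (forall A, F A -> open A /\ dense A) ->
    dense (\bigcap_(A in F) A).

Definition density_Baire (T : topologicalType) : Prop :=
  exists D : set T, min_dense_set D /\ card_Baire T D.

Definition nest (T : Type) (N : set (set T)) : Prop :=
  forall A B, N A -> N B -> A `<=` B \/ B `<=` A.

From HB Require Import structures.
From mathcomp Require Import all_boot all_order.
From mathcomp Require Import all_classical topology.

Set Implicit Arguments.
Unset Strict Implicit.
Unset Printing Implicit Defensive.

Local Open Scope classical_set_scope.
Local Open Scope card_scope.

(* Suppose a nonempty open O misses the intersection of the nest N. To each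
   point d of a dense set D lying in O attach a member g d of N avoiding d;
   these are at most #|D| open dense sets, so by the Baire property some x in
   O lies in all of them. Some B in N misses x, and B meets O in a point y of
   D. Since N is a nest, either g y is contained in B, which is impossible as
   x lies in g y, or B is contained in g y, impossible as y lies in B. *)

Lemma bigcap_nest_escaping (T : Type) (N : set (set T)) (S : set T)
    (g : T -> set T) :
  nest N -> (forall d, S d -> N (g d) /\ ~ g d d) ->
  (forall B, N B -> B `&` S !=set0) ->
  \bigcap_(d in S) g d `<=` \bigcap_(A in N) A.
Proof.
move=> nestN gS meetS x gx B NB.
have [y [By Sy]] := meetS B NB.
have [Ngy gyy] := gS y Sy.
have [gyB|Bgy] := nestN _ _ Ngy NB; first exact/gyB/gx.
by have := Bgy y By.
Qed.

Lemma escaping_choice (T : Type) (N : set (set T)) (O : set T) :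
  O `&` \bigcap_(A in N) A = set0 ->
  exists g : T -> set T, forall d, O d -> N (g d) /\ ~ g d d.
Proof.
move=> Odisj.
suff /choice[g gO] : forall d, exists A, O d -> N A /\ ~ A d by exists g.
move=> d.
have [Od|] := pselect (O d); last by exists set0.
have : ~ (\bigcap_(A in N) A) d.
  by move=> Nd; have : (O `&` \bigcap_(A in N) A) d by []; rewrite Odisj.
by move=> /existsNP[A /not_implyP[NA nAd]]; exists A.
Qed.

Lemma card_Baire_dense_bigcap_nest (T : topologicalType) (D : set T)
    (N : set (set T)) :
  dense D -> card_Baire T D -> nest N ->
  (forall A, N A -> open A /\ dense A) ->
  dense (\bigcap_(A in N) A).
Proof.
move=> denseD BaireD nestN openN O O0 openO.
apply/set0P/negP => /eqP Odisj.
have [g gO] := escaping_choice Odisj.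
pose S := O `&` D.
have gS d : S d -> N (g d) /\ ~ g d d by move=> [/gO].
have cardF : g @` S #<= D.
  exact: card_le_trans (card_image_le _ _) (subset_card_le (@subIsetr _ _ _)).
have openF A : (g @` S) A -> open A /\ dense A by move=> [d /gS[/openN ? _] <-].
have meetS B : N B -> B `&` S !=set0.
  move=> NB; have [openB denseB] := openN B NB.
  have [y [[Oy By] Dy]] := denseD _ (denseB O O0 openO) (openI openO openB).
  by exists y.
have [x [Ox gx]] := BaireD _ cardF openF O O0 openO.
rewrite bigcap_image in gx.
have : (O `&` \bigcap_(A in N) A) x.
  by split; last exact: bigcap_nest_escaping gx.
by rewrite Odisj.
Qed.

Theorem mainTheorem6 (T : topologicalType) :
  continuum T -> density_Baire T ->
  forall N : set (set T), nest N ->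
    (forall A, N A -> open A /\ dense A) ->
    dense (\bigcap_(A in N) A).
Proof.
move=> _ [D [[denseD _] BaireD]] N.
exact: card_Baire_dense_bigcap_nest denseD BaireD.
Qed.
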